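(* Let $L>0$, $T>0$, $K,M$ positive integers, $\Delta x=L/K$, $\Delta t=T/M$. Let $(E,N,V)$ be a sufficiently smooth solution of the periodic Zakharov system $\mathrm{i}E_t+E_{xx}=NE$, $N_t=V_{xx}$, $V_t=N+|E|^2$, $V(0,0)=0$ ($L$-periodic in $x$, $\int_0^LN_t(0,x)\,\mathrm{d}x=0$), and let $(E^{(m)},N^{(m)},V^{(m)})$, $m=0,\dots,M$, solve the DVDM scheme $$\begin{cases}\mathrm{i}\,\delta_t^+E^{(m)}_k=-\delta_x^{\langle 2\rangle}\mu_t^+E^{(m)}_k+(\mu_t^+N^{(m)}_k)(\mu_t^+E^{(m)}_k),\\ \delta_t^+N^{(m)}_k=\delta_x^{\langle 2\rangle}\mu_t^+V^{(m)}_k,\\ \delta_t^+V^{(m)}_k=\mu_t^+N^{(m)}_k+\mu_t^+|E^{(m)}_k|^2,\end{cases}$$ with $E^{(0)}_k=E(0,k\Delta x)$, $N^{(0)}_k=N(0,k\Delta x)$, $|V^{(0)}_k-V(0,k\Delta x)|\le C_V(\Delta x)^2$ ($C_V$ independent of $\Delta x$), and let $\Delta x$ be sufficiently small. Define $A^{(m)}:=\langle e_N^{(m)}+\tilde N^{(m)},|e_E^{(m)}|^2\rangle+2\,\mathrm{Re}\langle e_E^{(m)},\tilde E^{(m)}e_N^{(m)}\rangle$. Then for $m=0,\dots,M$, $$|A^{(m)}|\le\tfrac32\|e_N^{(m)}\|^2+C_4\|e_E^{(m)}\|^2$$ for a constant $C_4>0$ not depending on $\Delta t$ and $\Delta x$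.
   Context: Grid functions are $K$-periodic in $k$. Operators: $\delta_x^{\langle 2\rangle}u_k=(u_{k+1}-2u_k+u_{k-1})/(\Delta x)^2$, $\delta_t^+u^{(m)}=(u^{(m+1)}-u^{(m)})/\Delta t$, $\mu_t^+u^{(m)}=(u^{(m+1)}+u^{(m)})/2$. Inner product $\langle v,w\rangle=\sum_{k=1}^Kv_k\bar w_k\Delta x$, norm $\|v\|=\langle v,v\rangle^{1/2}$. Products and $|\cdot|^2$ of grid functions are componentwise. $\tilde E^{(m)}_k=E(m\Delta t,k\Delta x)$, $\tilde N^{(m)}_k=N(m\Delta t,k\Delta x)$; $e_E^{(m)}=E^{(m)}-\tilde E^{(m)}$, $e_N^{(m)}=N^{(m)}-\tilde N^{(m)}$. *)

From Stdlib Require Import Reals ZArith.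
From Coquelicot Require Import Coquelicot.
Open Scope R_scope.

Definition pd (i j : nat) (f : R -> R -> R) : R -> R -> R :=
  fun t x => Derive_n (fun s => Derive_n (fun y => f s y) j x) i t.

(** "Sufficiently smooth": all mixed partials d_t^i d_x^j exist everywhere
    and are jointly continuous (C^infinity on R x R). *)
Definition smooth2 (f : R -> R -> R) : Prop :=
  forall i j : nat,
    (forall t x, ex_derive (fun y => pd 0 j f t y) x) /\
    (forall t x, ex_derive (fun s => pd i j f s x) t) /\
    (forall t x, continuity_2d_pt (pd i j f) t x).

Definition reE (E : R -> R -> C) : R -> R -> R := fun t x => Re (E t x).
Definition imE (E : R -> R -> C) : R -> R -> R := fun t x => Im (E t x).

Definition cpd (i j : nat) (E : R -> R -> C) : R -> R -> C :=
  fun t x => (pd i j (reE E) t x, pd i j (imE E) t x).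

Definition periodic_grid {A : Type} (K : nat) (u : Z -> A) : Prop :=
  forall k : Z, u (k + Z.of_nat K)%Z = u k.

Definition ip (K : nat) (dx : R) (v w : Z -> C) : C :=
  Cmult (sum_n_m (fun k : nat => Cmult (v (Z.of_nat k)) (Cconj (w (Z.of_nat k)))) 1 K)
        (RtoC dx).

Definition gnorm (K : nat) (dx : R) (v : Z -> C) : R := sqrt (Re (ip K dx v v)).

Definition cgrid (u : Z -> R) : Z -> C := fun k => RtoC (u k).

Definition d2x (dx : R) (u : Z -> C) : Z -> C :=
  fun k => Cdiv (Cplus (Cminus (u (k + 1)%Z) (Cmult (RtoC 2) (u k))) (u (k - 1)%Z))
                (RtoC (dx ^ 2)).

Definition d2xR (dx : R) (u : Z -> R) : Z -> R :=
  fun k => (u (k + 1)%Z - 2 * u k + u (k - 1)%Z) / dx ^ 2.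

Definition dvdm_scheme (K M : nat) (dx dt : R)
  (Eh : nat -> Z -> C) (Nh Vh : nat -> Z -> R) : Prop :=
  (forall m, (m <= M)%nat ->
     periodic_grid K (Eh m) /\ periodic_grid K (Nh m) /\ periodic_grid K (Vh m)) /\
  (forall m k, (m < M)%nat ->
     let muE := fun j => Cdiv (Cplus (Eh (S m) j) (Eh m j)) (RtoC 2) in
     let muN := fun j => (Nh (S m) j + Nh m j) / 2 in
     let muV := fun j => (Vh (S m) j + Vh m j) / 2 in
     Cmult Ci (Cdiv (Cminus (Eh (S m) k) (Eh m k)) (RtoC dt))
       = Cplus (Copp (d2x dx muE k)) (Cmult (RtoC (muN k)) (muE k)) /\
     (Nh (S m) k - Nh m k) / dt = d2xR dx muV k /\
     (Vh (S m) k - Vh m k) / dt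
       = muN k + (Cmod (Eh (S m) k) ^ 2 + Cmod (Eh m k) ^ 2) / 2).

(** The periodic Zakharov system, classical smooth solution on [0,T]
    (E, N, V given on R x R as smooth extensions). *)
Definition zakharov_solution (L T : R) (E : R -> R -> C) (N V : R -> R -> R) : Prop :=
  smooth2 (reE E) /\ smooth2 (imE E) /\ smooth2 N /\ smooth2 V /\
  (forall t x, E t (x + L) = E t x) /\
  (forall t x, N t (x + L) = N t x) /\
  (forall t x, V t (x + L) = V t x) /\
  (forall t x, 0 <= t <= T ->
     Cplus (Cmult Ci (cpd 1 0 E t x)) (cpd 0 2 E t x) = Cmult (RtoC (N t x)) (E t x) /\
     pd 1 0 N t x = pd 0 2 V t x /\
     pd 1 0 V t x = N t x + Cmod (E t x) ^ 2) /\
  V 0 0 = 0 /\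
  RInt (fun x => pd 1 0 N 0 x) 0 L = 0.

From Stdlib Require Import Reals ZArith Lra Lia.
From Coquelicot Require Import Coquelicot.
Open Scope R_scope.

(* Pointwise, Young's and the Cauchy-Schwarz inequality give
   |A| <= 3/2 |e_N|^2 + C |e_E|^2 as soon as e_E is bounded uniformly in k, m, dx, dt; since
   E is bounded, this amounts to a uniform maximum-norm bound on the numerical solution E^(m).
   The DVDM scheme conserves the discrete mass ||E^(m)||^2 and the discrete energy
   ||d+ E||^2 + ||N||^2 / 2 + ||d+ V||^2 / 2 + <N, |E|^2> exactly, and a discrete Sobolev
   inequality bounds max |E|^2 by mass and gradient, while the energy bounds the gradient in
   terms of mass and max |E|^2.  The initial mass and energy are bounded by the smoothness of
   (E, N, V), using |V^(0) - V(0)| = O(dx^2) for the difference quotient of V^(0). *)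

(** * Sums over the grid *)

Fixpoint rsum (K : nat) (h : nat -> R) : R :=
  match K with O => 0 | S K' => rsum K' h + h (S K') end.

Definition gsum (K : nat) (f : Z -> R) : R := rsum K (fun n => f (Z.of_nat n)).

Lemma rsum_ext K h1 h2 :
  (forall n, (1 <= n <= K)%nat -> h1 n = h2 n) -> rsum K h1 = rsum K h2.
Proof.
  induction K as [|K IH]; intros H; simpl; [reflexivity|].
  rewrite IH by (intros; apply H; lia). rewrite H by lia. reflexivity.
Qed.

Lemma rsum_le K h1 h2 :
  (forall n, (1 <= n <= K)%nat -> h1 n <= h2 n) -> rsum K h1 <= rsum K h2.
Proof.
  induction K as [|K IH]; intros H; simpl; [lra|].
  pose proof (IH (fun n Hn => H n ltac:(lia))). pose proof (H (S K) ltac:(lia)). lra.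
Qed.

Lemma rsum_plus K h1 h2 : rsum K (fun n => h1 n + h2 n) = rsum K h1 + rsum K h2.
Proof. induction K; simpl; lra. Qed.

Lemma rsum_minus K h1 h2 : rsum K (fun n => h1 n - h2 n) = rsum K h1 - rsum K h2.
Proof. induction K; simpl; lra. Qed.

Lemma rsum_scal K c h : rsum K (fun n => c * h n) = c * rsum K h.
Proof. induction K; simpl; [ring|rewrite IHK; ring]. Qed.

Lemma rsum_const K c : rsum K (fun _ => c) = INR K * c.
Proof. induction K; simpl rsum; [simpl; ring|rewrite IHK, S_INR; ring]. Qed.

Lemma rsum_telescope K F : rsum K (fun n => F (S n) - F n) = F (S K) - F 1%nat.
Proof. induction K; simpl; [ring|rewrite IHK; ring]. Qed.

Lemma rsum_abs K h : Rabs (rsum K h) <= rsum K (fun n => Rabs (h n)).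
Proof.
  induction K; simpl; [rewrite Rabs_R0; lra|].
  eapply Rle_trans; [apply Rabs_triang|]. lra.
Qed.

Lemma rsum_nonneg K h : (forall n, (1 <= n <= K)%nat -> 0 <= h n) -> 0 <= rsum K h.
Proof. intros H. rewrite <- (Rmult_0_r (INR K)), <- rsum_const. now apply rsum_le. Qed.

Lemma rsum_le_prefix m K h : (forall n, 0 <= h n) -> (m <= K)%nat -> rsum m h <= rsum K h.
Proof.
  intros H. induction K; intros Hm.
  - replace m with 0%nat by lia. lra.
  - destruct (Nat.eq_dec m (S K)) as [->|Hne]; [lra|].
    simpl. specialize (IHK ltac:(lia)). specialize (H (S K)). lra.
Qed.

Lemma gsum_le_const K f c :
  (forall n, (1 <= n <= K)%nat -> f (Z.of_nat n) <= c) -> gsum K f <= INR K * c.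
Proof. intros H. rewrite <- rsum_const. now apply rsum_le. Qed.

Lemma gsum_shift K f : periodic_grid K f -> gsum K (fun k => f (k + 1)%Z) = gsum K f.
Proof.
  intros HP. apply Rminus_diag_uniq. unfold gsum. rewrite <- rsum_minus.
  transitivity (rsum K (fun n => f (Z.of_nat (S n)) - f (Z.of_nat n))).
  - apply rsum_ext. intros n _. now rewrite Nat2Z.inj_succ, <- Z.add_1_r.
  - rewrite (rsum_telescope K (fun n => f (Z.of_nat n))), Nat2Z.inj_succ, <- Z.add_1_r,
      Z.add_comm, HP. simpl. ring.
Qed.

Lemma gsum_eq_of_flux K f1 f0 F : periodic_grid K F ->
  (forall k, f1 k - f0 k = F (k + 1)%Z - F k) -> gsum K f1 = gsum K f0.
Proof.
  intros HP HF. apply Rminus_diag_uniq. unfold gsum. rewrite <- rsum_minus.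
  rewrite (rsum_ext K _ (fun n => F (Z.of_nat n + 1)%Z - F (Z.of_nat n))) by (intros; apply HF).
  rewrite rsum_minus. fold (gsum K F). fold (gsum K (fun k => F (k + 1)%Z)).
  rewrite gsum_shift by exact HP. ring.
Qed.

Lemma periodic_grid_pred {A : Type} K (u : Z -> A) k :
  periodic_grid K u -> u (k + Z.of_nat K - 1)%Z = u (k - 1)%Z.
Proof. intros H. replace (k + Z.of_nat K - 1)%Z with (k - 1 + Z.of_nat K)%Z by ring. apply H. Qed.

Lemma Re_sum_n_m (g : nat -> C) K : Re (sum_n_m g 1 K) = rsum K (fun n => Re (g n)).
Proof.
  induction K as [|K IH].
  - rewrite sum_n_m_zero; [reflexivity|lia].
  - rewrite sum_n_Sm by lia. simpl. now rewrite <- IH.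
Qed.

Lemma Im_sum_n_m (g : nat -> C) K : Im (sum_n_m g 1 K) = rsum K (fun n => Im (g n)).
Proof.
  induction K as [|K IH].
  - rewrite sum_n_m_zero; [reflexivity|lia].
  - rewrite sum_n_Sm by lia. simpl. now rewrite <- IH.
Qed.

Lemma Re_ip K dx v w :
  Re (ip K dx v w) = dx * gsum K (fun k => Re (v k) * Re (w k) + Im (v k) * Im (w k)).
Proof.
  unfold ip, gsum. simpl. rewrite Re_sum_n_m, Im_sum_n_m, Rmult_0_r, Rminus_0_r, Rmult_comm.
  f_equal. apply rsum_ext. intros n _. unfold Re, Im. simpl. ring.
Qed.

Lemma Im_ip K dx v w :
  Im (ip K dx v w) = dx * gsum K (fun k => Im (v k) * Re (w k) - Re (v k) * Im (w k)).
Proof.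
  unfold ip, gsum. simpl. rewrite Re_sum_n_m, Im_sum_n_m, Rmult_0_r, Rplus_0_l, Rmult_comm.
  f_equal. apply rsum_ext. intros n _. unfold Re, Im. simpl. ring.
Qed.

Lemma gnorm_sq K dx v : 0 <= dx ->
  gnorm K dx v ^ 2 = dx * gsum K (fun k => Cmod (v k) ^ 2).
Proof.
  intros Hdx. unfold gnorm.
  assert (Hre : Re (ip K dx v v) = dx * gsum K (fun k => Cmod (v k) ^ 2)).
  { rewrite Re_ip. f_equal. unfold gsum. apply rsum_ext. intros n _. rewrite Cmod2_alt. ring. }
  rewrite Hre, pow2_sqrt; [reflexivity|].
  apply Rmult_le_pos; [exact Hdx|]. apply rsum_nonneg. intros n _. apply pow2_ge_0.
Qed.

(** * Conservation laws of the scheme *)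

Definition avg (u1 u0 : Z -> R) (k : Z) : R := (u1 k + u0 k) / 2.
Definition fdiff (dx : R) (u : Z -> R) (k : Z) : R := (u (k + 1)%Z - u k) / dx.

Definition mass_density (a b : Z -> R) (k : Z) : R := a k ^ 2 + b k ^ 2.
Definition grad_density (dx : R) (a b : Z -> R) (k : Z) : R :=
  fdiff dx a k ^ 2 + fdiff dx b k ^ 2.
Definition energy_density (dx : R) (a b N V : Z -> R) (k : Z) : R :=
  grad_density dx a b k + N k ^ 2 / 2 + fdiff dx V k ^ 2 / 2 + N k * mass_density a b k.

Section SchemeStep.

Variables (K : nat) (dx dt : R) (a0 a1 b0 b1 N0 N1 V0 V1 : Z -> R).

Hypothesis dx_neq0 : dx <> 0.
Hypotheses (a0_per : periodic_grid K a0) (a1_per : periodic_grid K a1)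
  (b0_per : periodic_grid K b0) (b1_per : periodic_grid K b1)
  (V0_per : periodic_grid K V0) (V1_per : periodic_grid K V1).

Hypothesis a_step : forall k,
  a1 k - a0 k = dt * (- d2xR dx (avg b1 b0) k + avg N1 N0 k * avg b1 b0 k).
Hypothesis b_step : forall k,
  b1 k - b0 k = dt * (d2xR dx (avg a1 a0) k - avg N1 N0 k * avg a1 a0 k).
Hypothesis N_step : forall k, N1 k - N0 k = dt * d2xR dx (avg V1 V0) k.
Hypothesis V_step : forall k,
  V1 k - V0 k = dt * (avg N1 N0 k + (mass_density a1 b1 k + mass_density a0 b0 k) / 2).

Definition mass_flux (k : Z) : R :=
  2 * dt * (avg a1 a0 k * avg b1 b0 (k - 1) - avg b1 b0 k * avg a1 a0 (k - 1)) / dx ^ 2.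

Definition energy_flux (k : Z) : R :=
  (2 * (a1 k - a0 k) * (avg a1 a0 k - avg a1 a0 (k - 1))
   + 2 * (b1 k - b0 k) * (avg b1 b0 k - avg b1 b0 (k - 1))
   + (V1 k - V0 k) * (avg V1 V0 k - avg V1 V0 (k - 1))) / dx ^ 2.

Lemma mass_step : gsum K (mass_density a1 b1) = gsum K (mass_density a0 b0).
Proof.
  apply (gsum_eq_of_flux K _ _ mass_flux).
  - intros k. unfold mass_flux, avg.
    rewrite a0_per, a1_per, b0_per, b1_per, !(periodic_grid_pred K) by assumption.
    reflexivity.
  - intros k. unfold mass_density.
    replace (a1 k ^ 2 + b1 k ^ 2 - (a0 k ^ 2 + b0 k ^ 2))
      with ((a1 k - a0 k) * (a1 k + a0 k) + (b1 k - b0 k) * (b1 k + b0 k)) by ring.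
    rewrite a_step, b_step. unfold mass_flux, d2xR, avg.
    replace (k + 1 - 1)%Z with k by ring. field. exact dx_neq0.
Qed.

(* Discrete chain rule: the multipliers of the increments are the discrete variational
   derivatives of the energy, and the scheme's increments are dt times a skew combination
   of them, so the right-hand side vanishes along the scheme. *)
Lemma energy_density_increment k :
  energy_density dx a1 b1 N1 V1 k - energy_density dx a0 b0 N0 V0 k
  - (energy_flux (k + 1) - energy_flux k)
  = (a1 k - a0 k) * (2 * (avg N1 N0 k * avg a1 a0 k - d2xR dx (avg a1 a0) k))
    + (b1 k - b0 k) * (2 * (avg N1 N0 k * avg b1 b0 k - d2xR dx (avg b1 b0) k))
    + (N1 k - N0 k) * (avg N1 N0 k + (mass_density a1 b1 k + mass_density a0 b0 k) / 2)
    - (V1 k - V0 k) * d2xR dx (avg V1 V0) k.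
Proof.
  unfold energy_density, grad_density, mass_density, energy_flux, fdiff, d2xR, avg.
  replace (k + 1 - 1)%Z with k by ring. field. exact dx_neq0.
Qed.

Lemma energy_step :
  gsum K (energy_density dx a1 b1 N1 V1) = gsum K (energy_density dx a0 b0 N0 V0).
Proof.
  apply (gsum_eq_of_flux K _ _ energy_flux).
  - intros k. unfold energy_flux, avg.
    rewrite a0_per, a1_per, b0_per, b1_per, V0_per, V1_per, !(periodic_grid_pred K) by assumption.
    reflexivity.
  - intros k. apply Rminus_diag_uniq.
    rewrite energy_density_increment, a_step, b_step, N_step, V_step. ring.
Qed.

End SchemeStep.

Definition re_part (u : Z -> C) (k : Z) : R := Re (u k).
Definition im_part (u : Z -> C) (k : Z) : R := Im (u k).

Lemma Cdiv_RtoC (z : C) r : r <> 0 -> Cdiv z (RtoC r) = (Re z / r, Im z / r).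
Proof.
  intros Hr. destruct z as [x y]. unfold Cdiv, Cmult, Cinv, RtoC, Re, Im; simpl.
  f_equal; field; auto.
Qed.

Lemma dvdm_E_step_real_form dx dt (E1 E0 : Z -> C) (N1 N0 : Z -> R) k :
  dt <> 0 -> dx <> 0 ->
  let muE := fun j => Cdiv (Cplus (E1 j) (E0 j)) (RtoC 2) in
  Cmult Ci (Cdiv (Cminus (E1 k) (E0 k)) (RtoC dt))
    = Cplus (Copp (d2x dx muE k)) (Cmult (RtoC (avg N1 N0 k)) (muE k)) ->
  re_part E1 k - re_part E0 k
    = dt * (- d2xR dx (avg (im_part E1) (im_part E0)) k
            + avg N1 N0 k * avg (im_part E1) (im_part E0) k) /\
  im_part E1 k - im_part E0 k
    = dt * (d2xR dx (avg (re_part E1) (re_part E0)) k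
            - avg N1 N0 k * avg (re_part E1) (re_part E0) k).
Proof.
  intros Hdt Hdx muE H. unfold muE, d2x in H.
  rewrite !Cdiv_RtoC in H by (try apply pow_nonzero; lra).
  unfold re_part, im_part, d2xR, avg.
  destruct (E1 k) as [x1 y1], (E0 k) as [x0 y0],
    (E1 (k + 1)%Z) as [x1p y1p], (E0 (k + 1)%Z) as [x0p y0p],
    (E1 (k - 1)%Z) as [x1m y1m], (E0 (k - 1)%Z) as [x0m y0m].
  unfold Cmult, Cminus, Cplus, Copp, RtoC, Ci, Re, Im, avg in *. simpl in H |- *.
  injection H as H1 H2.
  split.
  - replace (x1 - x0) with (dt * ((x1 + - x0) / dt)) by (field; exact Hdt). f_equal. lra.
  - replace (y1 - y0) with (dt * ((y1 + - y0) / dt)) by (field; exact Hdt). f_equal. lra.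
Qed.

Lemma periodic_re_part K u : periodic_grid K u -> periodic_grid K (re_part u).
Proof. intros H k. unfold re_part. now rewrite H. Qed.

Lemma periodic_im_part K u : periodic_grid K u -> periodic_grid K (im_part u).
Proof. intros H k. unfold im_part. now rewrite H. Qed.

Lemma mass_density_Cmod u k : mass_density (re_part u) (im_part u) k = Cmod (u k) ^ 2.
Proof. unfold mass_density, re_part, im_part. now rewrite Cmod2_alt. Qed.

Lemma diff_eq_of_quotient_eq x y dt z : dt <> 0 -> (x - y) / dt = z -> x - y = dt * z.
Proof. intros Hdt <-. field. exact Hdt. Qed.

Lemma dvdm_conserves K M dx dt Eh Nh Vh :
  dx <> 0 -> dt <> 0 -> dvdm_scheme K M dx dt Eh Nh Vh ->
  forall m, (m <= M)%nat ->
  gsum K (mass_density (re_part (Eh m)) (im_part (Eh m)))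
    = gsum K (mass_density (re_part (Eh 0%nat)) (im_part (Eh 0%nat))) /\
  gsum K (energy_density dx (re_part (Eh m)) (im_part (Eh m)) (Nh m) (Vh m))
    = gsum K (energy_density dx (re_part (Eh 0%nat)) (im_part (Eh 0%nat)) (Nh 0%nat) (Vh 0%nat)).
Proof.
  intros Hdx Hdt [Hper Hstep].
  induction m as [|m IH]; intros Hm; [split; reflexivity|].
  destruct (IH ltac:(lia)) as [IHmass IHenergy].
  destruct (Hper m ltac:(lia)) as (PE0 & _ & PV0), (Hper (S m) Hm) as (PE1 & _ & PV1).
  assert (HE : forall k, _) by (intros k; destruct (Hstep m k ltac:(lia)) as (HE & _ & _);
    exact (dvdm_E_step_real_form dx dt (Eh (S m)) (Eh m) (Nh (S m)) (Nh m) k Hdt Hdx HE)).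
  assert (HN : forall k, Nh (S m) k - Nh m k = dt * d2xR dx (avg (Vh (S m)) (Vh m)) k).
  { intros k. destruct (Hstep m k ltac:(lia)) as (_ & HN & _).
    now apply diff_eq_of_quotient_eq. }
  assert (HV : forall k, Vh (S m) k - Vh m k = dt * (avg (Nh (S m)) (Nh m) k
      + (mass_density (re_part (Eh (S m))) (im_part (Eh (S m))) k
         + mass_density (re_part (Eh m)) (im_part (Eh m)) k) / 2)).
  { intros k. destruct (Hstep m k ltac:(lia)) as (_ & _ & HV).
    rewrite !mass_density_Cmod. now apply diff_eq_of_quotient_eq. }
  split.
  - rewrite <- IHmass.
    apply (mass_step K dx dt _ _ _ _ (Nh m) (Nh (S m)));
      auto using periodic_re_part, periodic_im_part; intros k; apply HE.
  - rewrite <- IHenergy.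
    apply (energy_step K dx dt _ _ _ _ (Nh m) (Nh (S m)));
      auto using periodic_re_part, periodic_im_part; intros k; apply HE.
Qed.

(** * A priori maximum-norm bound *)

Lemma grid_le_mean_add_variation K f n : (1 <= n <= K)%nat ->
  f (Z.of_nat n) <= gsum K f / INR K + 2 * gsum K (fun k => Rabs (f (k + 1)%Z - f k)).
Proof.
  intros Hn.
  set (Var := gsum K (fun k => Rabs (f (k + 1)%Z - f k))).
  assert (Hvar : forall j, (1 <= j <= K)%nat -> Rabs (f (Z.of_nat j) - f 1%Z) <= Var).
  { intros j Hj.
    pose proof (rsum_telescope (j - 1) (fun i => f (Z.of_nat i))) as Htel. cbv beta in Htel.
    replace (S (j - 1)) with j in Htel by lia. change (Z.of_nat 1) with 1%Z in Htel.
    rewrite <- Htel. eapply Rle_trans; [apply rsum_abs|].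
    unfold Var, gsum. eapply Rle_trans; [apply (rsum_le_prefix _ K); [intros; apply Rabs_pos|lia]|].
    right. apply rsum_ext. intros i _. now rewrite Nat2Z.inj_succ, <- Z.add_1_r. }
  assert (HK : 0 < INR K) by (apply lt_0_INR; lia).
  assert (Hsum : INR K * f (Z.of_nat n) <= gsum K f + INR K * (2 * Var)).
  { rewrite <- !rsum_const. unfold gsum. rewrite <- rsum_plus. apply rsum_le.
    intros j Hj. pose proof (Hvar n Hn) as Hn'. pose proof (Hvar j Hj) as Hj'.
    apply Rabs_le_between in Hn'. apply Rabs_le_between in Hj'. lra. }
  apply (Rmult_le_reg_l (INR K)); [exact HK|].
  replace (INR K * (gsum K f / INR K + 2 * Var)) with (gsum K f + INR K * (2 * Var))
    by (field; lra).
  exact Hsum.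
Qed.

Lemma abs_mul_le_young x y s : 0 < s -> Rabs (x * y) <= s / 2 * x ^ 2 + / (2 * s) * y ^ 2.
Proof.
  intros Hs.
  assert (Hminus : s / 2 * x ^ 2 + / (2 * s) * y ^ 2 - x * y = / (2 * s) * (s * x - y) ^ 2)
    by (field; lra).
  assert (Hplus : s / 2 * x ^ 2 + / (2 * s) * y ^ 2 + x * y = / (2 * s) * (s * x + y) ^ 2)
    by (field; lra).
  assert (Hinv : 0 < / (2 * s)) by (apply Rinv_0_lt_compat; lra).
  pose proof (Rmult_le_pos _ _ (Rlt_le _ _ Hinv) (pow2_ge_0 (s * x - y))).
  pose proof (Rmult_le_pos _ _ (Rlt_le _ _ Hinv) (pow2_ge_0 (s * x + y))).
  apply Rabs_le. lra.
Qed.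

Lemma abs_sq_diff_le u1 u0 eta dx : 0 < eta -> 0 < dx ->
  Rabs (u1 ^ 2 - u0 ^ 2) <= eta / 2 * dx * ((u1 - u0) / dx) ^ 2 + dx / eta * (u1 ^ 2 + u0 ^ 2).
Proof.
  intros He Hdx.
  replace (u1 ^ 2 - u0 ^ 2) with ((u1 - u0) / dx * (dx * (u1 + u0))) by (field; lra).
  eapply Rle_trans; [apply (abs_mul_le_young _ _ (eta * dx)); nra|].
  replace (/ (2 * (eta * dx)) * (dx * (u1 + u0)) ^ 2) with (dx / eta * ((u1 + u0) ^ 2 / 2))
    by (field; lra).
  assert (Hpar : (u1 + u0) ^ 2 / 2 <= u1 ^ 2 + u0 ^ 2) by (pose proof (pow2_ge_0 (u1 - u0)); nra).
  assert (0 < dx / eta) by (apply Rdiv_lt_0_compat; lra).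
  apply Rplus_le_compat; [right; field; lra|]. now apply Rmult_le_compat_l; [lra|].
Qed.

Lemma mass_density_increment_le a b dx eta k : 0 < eta -> 0 < dx ->
  Rabs (mass_density a b (k + 1) - mass_density a b k)
  <= eta / 2 * dx * grad_density dx a b k
     + dx / eta * (mass_density a b (k + 1) + mass_density a b k).
Proof.
  intros He Hdx. unfold mass_density, grad_density, fdiff.
  pose proof (abs_sq_diff_le (a (k + 1)%Z) (a k) eta dx He Hdx).
  pose proof (abs_sq_diff_le (b (k + 1)%Z) (b k) eta dx He Hdx).
  replace (a (k + 1)%Z ^ 2 + b (k + 1)%Z ^ 2 - (a k ^ 2 + b k ^ 2))
    with ((a (k + 1)%Z ^ 2 - a k ^ 2) + (b (k + 1)%Z ^ 2 - b k ^ 2)) by ring.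
  eapply Rle_trans; [apply Rabs_triang|]. lra.
Qed.

Lemma mass_variation_le K dx eta a b : 0 < eta -> 0 < dx ->
  periodic_grid K a -> periodic_grid K b ->
  gsum K (fun k => Rabs (mass_density a b (k + 1)%Z - mass_density a b k))
  <= eta / 2 * (dx * gsum K (grad_density dx a b)) + 2 * (dx / eta) * gsum K (mass_density a b).
Proof.
  intros He Hdx Pa Pb.
  assert (Hshift : gsum K (fun k => mass_density a b (k + 1)%Z) = gsum K (mass_density a b)).
  { apply gsum_shift. intros k. unfold mass_density. now rewrite Pa, Pb. }
  eapply Rle_trans.
  { apply (rsum_le K _ (fun n => eta / 2 * dx * grad_density dx a b (Z.of_nat n)
      + dx / eta * (mass_density a b (Z.of_nat n + 1)%Z + mass_density a b (Z.of_nat n)))).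
    intros n _. now apply mass_density_increment_le. }
  rewrite rsum_plus, !rsum_scal, rsum_plus. unfold gsum in Hshift |- *. rewrite Hshift.
  right. ring.
Qed.

Lemma discrete_sobolev K dx eta a b n : 0 < eta -> 0 < dx ->
  periodic_grid K a -> periodic_grid K b -> (1 <= n <= K)%nat ->
  mass_density a b (Z.of_nat n)
  <= gsum K (mass_density a b) / INR K + eta * (dx * gsum K (grad_density dx a b))
     + 4 / eta * (dx * gsum K (mass_density a b)).
Proof.
  intros He Hdx Pa Pb Hn.
  pose proof (grid_le_mean_add_variation K (mass_density a b) n Hn).
  pose proof (mass_variation_le K dx eta a b He Hdx Pa Pb).
  replace (4 / eta * (dx * gsum K (mass_density a b)))
    with (2 * (2 * (dx / eta) * gsum K (mass_density a b))) by (field; lra).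
  lra.
Qed.

Lemma grad_le_energy K dx a b N V G :
  (forall n, (1 <= n <= K)%nat -> mass_density a b (Z.of_nat n) <= G) ->
  gsum K (grad_density dx a b)
  <= gsum K (energy_density dx a b N V) + G / 2 * gsum K (mass_density a b).
Proof.
  intros HG. unfold gsum. rewrite <- rsum_scal, <- rsum_plus. apply rsum_le.
  intros n Hn. specialize (HG n Hn). unfold energy_density in *.
  set (k := Z.of_nat n) in *. set (g := mass_density a b k) in *.
  assert (0 <= g) by (unfold g, mass_density; nra).
  pose proof (pow2_ge_0 (N k + g)). pose proof (pow2_ge_0 (fdiff dx V k)).
  nra.
Qed.

Definition linf_bound (L P H : R) : R :=
  P / L + 2 * H + P ^ 2 / L + 4 * P ^ 2 * (P + 1) + 4 * P * (P + 1).

Lemma linf_bound_nonneg L P H : 0 < L -> 0 <= P -> 0 <= H -> 0 <= linf_bound L P H.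
Proof.
  intros HL HP HH. unfold linf_bound.
  assert (0 <= P / L) by (apply Rdiv_le_0_compat; lra).
  assert (0 <= P ^ 2 / L) by (apply Rdiv_le_0_compat; [apply pow2_ge_0|lra]).
  assert (0 <= P ^ 2 * (P + 1)) by (apply Rmult_le_pos; [apply pow2_ge_0|lra]).
  nra.
Qed.

Lemma linf_bound_le L P P' H H' : 0 < L -> 0 <= P <= P' -> H <= H' ->
  linf_bound L P H <= linf_bound L P' H'.
Proof.
  intros HL HP HH. unfold linf_bound, Rdiv.
  assert (0 < / L) by (apply Rinv_0_lt_compat; lra).
  assert (P ^ 2 <= P' ^ 2) by nra.
  assert (P ^ 2 * (P + 1) <= P' ^ 2 * (P' + 1)) by (apply Rmult_le_compat; nra).
  nra.
Qed.

(* Sobolev with eta = 1 / (P + 1) bounds the maximum by the gradient, the energy bounds the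
   gradient by the maximum times the mass; the factor eta * P < 1 closes the loop. *)
Lemma mass_density_le_linf_bound K dx a b N V P H n : (1 <= n <= K)%nat -> 0 < dx ->
  periodic_grid K a -> periodic_grid K b ->
  dx * gsum K (mass_density a b) <= P -> dx * gsum K (energy_density dx a b N V) <= H ->
  mass_density a b (Z.of_nat n) <= linf_bound (dx * INR K) P H.
Proof.
  intros Hn Hdx Pa Pb HP HH.
  set (L := dx * INR K).
  assert (HL : 0 < L) by (apply Rmult_lt_0_compat; [lra|apply lt_0_INR; lia]).
  set (Ps := dx * gsum K (mass_density a b)).
  set (Qs := dx * gsum K (grad_density dx a b)).
  set (Hs := dx * gsum K (energy_density dx a b N V)).
  assert (Ps0 : 0 <= Ps).
  { apply Rmult_le_pos; [lra|]. apply rsum_nonneg. intros j _. unfold mass_density. nra. }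
  assert (Qs0 : 0 <= Qs).
  { apply Rmult_le_pos; [lra|]. apply rsum_nonneg. intros j _. unfold grad_density. nra. }
  set (eta := / (Ps + 1)).
  assert (He : 0 < eta) by (apply Rinv_0_lt_compat; lra).
  assert (HePs : eta * (Ps + 1) = 1) by (apply Rinv_l; lra).
  assert (Hmean : gsum K (mass_density a b) / INR K = Ps / L).
  { unfold Ps, L. field. split; [apply not_0_INR; lia|lra]. }
  assert (Hpen : 4 / eta * Ps = 4 * Ps * (Ps + 1)) by (unfold eta; field; lra).
  set (G := Ps / L + eta * Qs + 4 * Ps * (Ps + 1)).
  assert (Hsob : forall j, (1 <= j <= K)%nat -> mass_density a b (Z.of_nat j) <= G).
  { intros j Hj. eapply Rle_trans; [apply (discrete_sobolev K dx eta); auto|].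
    fold Ps Qs. rewrite Hmean, Hpen. apply Rle_refl. }
  assert (HQ : Qs <= Hs + G / 2 * Ps).
  { pose proof (grad_le_energy K dx a b N V G Hsob).
    unfold Qs, Hs, Ps. replace (G / 2 * (dx * gsum K (mass_density a b)))
      with (dx * (G / 2 * gsum K (mass_density a b))) by ring.
    rewrite <- Rmult_plus_distr_l. apply Rmult_le_compat_l; lra. }
  assert (HQ' : Qs <= 2 * Hs + Ps ^ 2 / L + 4 * Ps ^ 2 * (Ps + 1)).
  { unfold G in HQ. replace (Ps ^ 2 / L) with (Ps * (Ps / L)) by (field; lra). nra. }
  eapply Rle_trans; [apply (Hsob n Hn)|].
  eapply Rle_trans; [|apply (linf_bound_le L Ps P Hs H); auto].
  unfold G, linf_bound. nra.
Qed.

Lemma dvdm_linf_bound K M dx dt Eh Nh Vh P H m n :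
  0 < dx -> dt <> 0 -> dvdm_scheme K M dx dt Eh Nh Vh ->
  dx * gsum K (mass_density (re_part (Eh 0%nat)) (im_part (Eh 0%nat))) <= P ->
  dx * gsum K (energy_density dx (re_part (Eh 0%nat)) (im_part (Eh 0%nat)) (Nh 0%nat) (Vh 0%nat))
    <= H ->
  (m <= M)%nat -> (1 <= n <= K)%nat ->
  Cmod (Eh m (Z.of_nat n)) ^ 2 <= linf_bound (dx * INR K) P H.
Proof.
  intros Hdx Hdt Hsch HP HH Hm Hn.
  destruct (dvdm_conserves K M dx dt Eh Nh Vh ltac:(lra) Hdt Hsch m Hm) as [Hmass Henergy].
  destruct (proj1 Hsch m Hm) as (PE & _ & _).
  rewrite <- mass_density_Cmod.
  apply (mass_density_le_linf_bound K dx _ _ (Nh m) (Vh m));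
    auto using periodic_re_part, periodic_im_part.
  - now rewrite Hmass.
  - now rewrite Henergy.
Qed.

(** * Estimating A *)

Lemma pointwise_A_le (e p : C) n Nt B2 BE BN :
  Cmod e ^ 2 <= B2 -> Cmod p ^ 2 <= BE -> Rabs Nt <= BN ->
  Rabs ((n + Nt) * Cmod e ^ 2 + 2 * (n * (Re e * Re p + Im e * Im p)))
  <= 3 / 2 * n ^ 2 + (B2 / 2 + BN + BE + 1) * Cmod e ^ 2.
Proof.
  intros He Hp HN. rewrite !Cmod2_alt in *.
  set (g := Re e ^ 2 + Im e ^ 2) in *. set (s := Re e * Re p + Im e * Im p).
  assert (g0 : 0 <= g) by (unfold g; nra).
  assert (Hng : Rabs (n * g) <= n ^ 2 / 2 + B2 / 2 * g).
  { rewrite Rabs_mult, (Rabs_pos_eq g) by lra.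
    pose proof (pow2_ge_0 (Rabs n - g)). pose proof (Rabs_pos n).
    rewrite <- (pow2_abs n). nra. }
  assert (HNg : Rabs (Nt * g) <= BN * g).
  { rewrite Rabs_mult, (Rabs_pos_eq g) by lra. now apply Rmult_le_compat_r. }
  assert (Hcs : s ^ 2 <= g * (Re p ^ 2 + Im p ^ 2)).
  { unfold s, g. pose proof (pow2_ge_0 (Re e * Im p - Im e * Re p)). nra. }
  assert (Hns : Rabs (2 * (n * s)) <= n ^ 2 + BE * g).
  { apply Rabs_le. pose proof (pow2_ge_0 (n - s)). pose proof (pow2_ge_0 (n + s)).
    assert (g * (Re p ^ 2 + Im p ^ 2) <= BE * g)
      by (rewrite Rmult_comm; now apply Rmult_le_compat_r).
    nra. }
  replace ((n + Nt) * g + 2 * (n * s)) with (n * g + Nt * g + 2 * (n * s)) by ring.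
  eapply Rle_trans; [apply Rabs_triang|].
  eapply Rle_trans; [apply Rplus_le_compat_r, Rabs_triang|].
  nra.
Qed.

Lemma Cmod_real (z : C) : Im z = 0 -> Cmod z = Rabs (Re z).
Proof. destruct z as [x y]. simpl. intros ->. apply Cmod_R. Qed.

Lemma ip_A_le K dx (eE Et : Z -> C) (eN Nt : Z -> R) B2 BE BN : 0 <= dx ->
  (forall n, (1 <= n <= K)%nat -> Cmod (eE (Z.of_nat n)) ^ 2 <= B2 /\
     Cmod (Et (Z.of_nat n)) ^ 2 <= BE /\ Rabs (Nt (Z.of_nat n)) <= BN) ->
  Cmod (Cplus (ip K dx (cgrid (fun k => eN k + Nt k)) (fun k => RtoC (Cmod (eE k) ^ 2)))
              (RtoC (2 * Re (ip K dx eE (fun k => Cmult (Et k) (RtoC (eN k)))))))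
  <= 3 / 2 * gnorm K dx (cgrid eN) ^ 2 + (B2 / 2 + BN + BE + 1) * gnorm K dx eE ^ 2.
Proof.
  intros Hdx Hbd. rewrite Cmod_real.
  2:{ rewrite im_plus, Im_ip. unfold gsum. rewrite (rsum_ext K _ (fun _ => 0)), rsum_const.
      - simpl. ring.
      - intros n _. unfold cgrid, Re, Im. simpl. ring. }
  assert (Hlin : forall c1 c2 f1 f2, c1 * (dx * gsum K f1) + c2 * (dx * gsum K f2)
                 = dx * gsum K (fun k => c1 * f1 k + c2 * f2 k)).
  { intros. unfold gsum. rewrite rsum_plus, !rsum_scal. ring. }
  rewrite re_plus, re_RtoC, !Re_ip, !gnorm_sq by exact Hdx.
  rewrite <- (Rmult_1_l (dx * gsum K _)) at 1. rewrite !Hlin.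
  rewrite Rabs_mult, (Rabs_pos_eq dx) by exact Hdx.
  apply Rmult_le_compat_l; [exact Hdx|].
  eapply Rle_trans; [apply rsum_abs|]. apply rsum_le. intros n Hn.
  destruct (Hbd n Hn) as (He & HEt & HNt).
  replace (Cmod (cgrid eN (Z.of_nat n)) ^ 2) with (eN (Z.of_nat n) ^ 2)
    by (unfold cgrid; now rewrite Cmod_R, pow2_abs).
  eapply Rle_trans;
    [|apply (pointwise_A_le _ (Et (Z.of_nat n)) (eN (Z.of_nat n)) (Nt (Z.of_nat n)) B2 BE BN);
      auto].
  right. f_equal. unfold cgrid, Re, Im. simpl. ring.
Qed.

Lemma Cmod_sub_sq_le (u v : C) : Cmod (Cminus u v) ^ 2 <= 2 * (Cmod u ^ 2 + Cmod v ^ 2).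
Proof.
  rewrite !Cmod2_alt. destruct u as [x1 y1], v as [x2 y2]. unfold Re, Im. simpl.
  pose proof (pow2_ge_0 (x1 + x2)). pose proof (pow2_ge_0 (y1 + y2)). nra.
Qed.

(** * Bounds coming from the exact solution *)

Lemma grid_point_bounds L K n : 0 < L -> (n <= K)%nat -> (0 < K)%nat ->
  0 <= INR n * (L / INR K) <= L.
Proof.
  intros HL Hn HK.
  assert (HKp : 0 < INR K) by (apply lt_0_INR; lia).
  assert (HnK : INR n <= INR K) by (apply le_INR; lia).
  assert (Hdx : 0 < L / INR K) by (apply Rdiv_lt_0_compat; lra).
  assert (HKdx : INR K * (L / INR K) = L) by (field; lra).
  pose proof (pos_INR n). split; nra.
Qed.

(* A chain of points at mutual distance < delta / 2 joins (a, c) to any point of the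
   rectangle, and f varies by less than 1 along each link. *)
Lemma continuity_2d_bounded (f : R -> R -> R) a b c d :
  (forall x y, a <= x <= b -> c <= y <= d -> continuity_2d_pt f x y) ->
  exists B, forall x y, a <= x <= b -> c <= y <= d -> Rabs (f x y) <= B.
Proof.
  intros Hc.
  destruct (uniform_continuity_2d f a b c d Hc (mkposreal 1 Rlt_0_1)) as [del Hd].
  assert (Hdp : 0 < del) by apply cond_pos.
  assert (Hchain : forall n : nat, forall u v, a <= u <= b -> c <= v <= d ->
     u - a <= INR n * (del / 2) -> v - c <= INR n * (del / 2) ->
     Rabs (f u v) <= Rabs (f a c) + INR n).
  { induction n as [|n IH]; intros u v Hu Hv Hu' Hv'.
    - simpl in *. replace u with a by lra. replace v with c by lra. lra.
    - set (u' := Rmax a (u - del / 2)). set (v' := Rmax c (v - del / 2)).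
      assert (Hu1 : a <= u' <= u) by (unfold u'; apply Rmax_case_strong; lra).
      assert (Hv1 : c <= v' <= v) by (unfold v'; apply Rmax_case_strong; lra).
      assert (Hu2 : u - u' <= del / 2) by (unfold u'; apply Rmax_case_strong; lra).
      assert (Hv2 : v - v' <= del / 2) by (unfold v'; apply Rmax_case_strong; lra).
      rewrite S_INR in *. pose proof (pos_INR n).
      assert (Hu3 : u' - a <= INR n * (del / 2))
        by (unfold u'; apply Rmax_case_strong; intros; nra).
      assert (Hv3 : v' - c <= INR n * (del / 2))
        by (unfold v'; apply Rmax_case_strong; intros; nra).
      specialize (IH u' v' ltac:(lra) ltac:(lra) Hu3 Hv3).
      assert (Hlink : Rabs (f u v - f u' v') < 1).
      { apply (Hd u' v' u v); try lra; rewrite Rabs_pos_eq; lra. }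
      pose proof (Rabs_triang (f u v - f u' v') (f u' v')) as Htri.
      replace (f u v - f u' v' + f u' v') with (f u v) in Htri by ring. simpl in Hlink. lra. }
  destruct (INR_archimed (del / 2) (Rabs (b - a) + Rabs (d - c)) ltac:(lra)) as [n Hn].
  exists (Rabs (f a c) + INR n). intros x y Hx Hy. apply Hchain; auto.
  - pose proof (Rle_abs (b - a)). pose proof (Rabs_pos (d - c)). lra.
  - pose proof (Rle_abs (d - c)). pose proof (Rabs_pos (b - a)). lra.
Qed.

Lemma smooth2_pd_bounded f i j a b c d : smooth2 f ->
  exists B, 0 <= B /\ forall x y, a <= x <= b -> c <= y <= d -> Rabs (pd i j f x y) <= B.
Proof.
  intros Hf.
  destruct (continuity_2d_bounded (pd i j f) a b c d) as [B HB].
  { intros x y _ _. exact (proj2 (proj2 (Hf i j)) x y). }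
  exists (Rmax 0 B). split; [apply Rmax_l|].
  intros x y Hx Hy. eapply Rle_trans; [apply HB; auto|apply Rmax_r].
Qed.

Lemma smooth2_lipschitz f t D c d : smooth2 f ->
  (forall y, c <= y <= d -> Rabs (pd 0 1 f t y) <= D) ->
  forall y1 y2, c <= y1 -> y1 <= y2 -> y2 <= d -> Rabs (f t y2 - f t y1) <= D * (y2 - y1).
Proof.
  intros Hf HD y1 y2 H1 H2 H3.
  destruct (Req_dec y1 y2) as [<-|Hne].
  { rewrite Rminus_diag, Rabs_R0. lra. }
  destruct (MVT_cor2 (fun y => f t y) (fun y => pd 0 1 f t y) y1 y2 ltac:(lra)) as [y [Hy Hyr]].
  { intros y _. apply is_derive_Reals, Derive_correct. exact (proj1 (Hf 0%nat 0%nat) t y). }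
  rewrite Hy, Rabs_mult, (Rabs_pos_eq (y2 - y1)) by lra.
  apply Rmult_le_compat_r; [lra|]. apply HD; lra.
Qed.

Lemma fdiff_sq_le dx u k D : 0 < dx -> Rabs (u (k + 1)%Z - u k) <= D * dx ->
  fdiff dx u k ^ 2 <= D ^ 2.
Proof.
  intros Hdx H. apply pow_maj_Rabs. unfold fdiff, Rdiv.
  rewrite Rabs_mult, Rabs_inv, (Rabs_pos_eq dx) by lra.
  apply (Rmult_le_reg_r dx); [lra|]. rewrite Rmult_assoc, Rinv_l by lra. lra.
Qed.

Lemma energy_density_le dx a b N V k DA DB DV BN BE : 0 < dx ->
  Rabs (a (k + 1)%Z - a k) <= DA * dx -> Rabs (b (k + 1)%Z - b k) <= DB * dx ->
  Rabs (V (k + 1)%Z - V k) <= DV * dx -> Rabs (N k) <= BN -> mass_density a b k <= BE ->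
  energy_density dx a b N V k <= DA ^ 2 + DB ^ 2 + BN ^ 2 / 2 + DV ^ 2 / 2 + BN * BE.
Proof.
  intros Hdx Ha Hb HV HN Hm. unfold energy_density, grad_density.
  pose proof (fdiff_sq_le dx a k DA Hdx Ha). pose proof (fdiff_sq_le dx b k DB Hdx Hb).
  pose proof (fdiff_sq_le dx V k DV Hdx HV).
  pose proof (pow_maj_Rabs _ _ 2 HN).
  assert (0 <= mass_density a b k) by (unfold mass_density; nra).
  assert (N k * mass_density a b k <= BN * BE).
  { apply Rle_trans with (Rabs (N k) * mass_density a b k).
    - apply Rmult_le_compat_r; [lra|apply Rle_abs].
    - apply Rmult_le_compat; auto using Rabs_pos. }
  lra.
Qed.

Lemma abs_increment_le_of_close u1 u0 v1 v0 D c dx : 0 < dx < 1 ->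
  Rabs (v1 - v0) <= D * dx -> Rabs (u1 - v1) <= c * dx ^ 2 -> Rabs (u0 - v0) <= c * dx ^ 2 ->
  Rabs (u1 - u0) <= (D + 2 * Rabs c) * dx.
Proof.
  intros Hdx Hv H1 H0.
  assert (Hc : c * dx ^ 2 <= Rabs c * dx).
  { apply Rle_trans with (Rabs c * dx ^ 2).
    - apply Rmult_le_compat_r; [apply pow2_ge_0|apply Rle_abs].
    - apply Rmult_le_compat_l; [apply Rabs_pos|nra]. }
  replace (u1 - u0) with ((v1 - v0) + (u1 - v1) - (u0 - v0)) by ring.
  eapply Rle_trans; [apply Rabs_triang|]. rewrite Rabs_Ropp.
  eapply Rle_trans; [apply Rplus_le_compat_r, Rabs_triang|]. lra.
Qed.

Lemma dvdm_initial_energy_bounded L E N V CV BE BN : 0 < L ->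
  smooth2 (reE E) -> smooth2 (imE E) -> smooth2 V ->
  (forall x, 0 <= x <= L -> Cmod (E 0 x) ^ 2 <= BE) ->
  (forall x, 0 <= x <= L -> Rabs (N 0 x) <= BN) ->
  exists H, 0 <= H /\
  forall K : nat, (0 < K)%nat -> let dx := L / INR K in dx < 1 ->
  forall (Eh0 : Z -> C) (Nh0 Vh0 : Z -> R),
    (forall k, Eh0 k = E 0 (IZR k * dx)) -> (forall k, Nh0 k = N 0 (IZR k * dx)) ->
    (forall k, Rabs (Vh0 k - V 0 (IZR k * dx)) <= CV * dx ^ 2) ->
    dx * gsum K (energy_density dx (re_part Eh0) (im_part Eh0) Nh0 Vh0) <= H.
Proof.
  intros HL sRe sIm sV HBE HBN.
  destruct (smooth2_pd_bounded (reE E) 0 1 0 0 0 (L + 1) sRe) as (DR & _ & HDR).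
  destruct (smooth2_pd_bounded (imE E) 0 1 0 0 0 (L + 1) sIm) as (DI & _ & HDI).
  destruct (smooth2_pd_bounded V 0 1 0 0 0 (L + 1) sV) as (DV & _ & HDV).
  assert (BE0 : 0 <= BE) by (eapply Rle_trans; [apply pow2_ge_0|apply (HBE 0); lra]).
  assert (BN0 : 0 <= BN) by (eapply Rle_trans; [apply Rabs_pos|apply (HBN 0); lra]).
  set (DV' := DV + 2 * Rabs CV).
  exists (L * (DR ^ 2 + DI ^ 2 + BN ^ 2 / 2 + DV' ^ 2 / 2 + BN * BE)). split.
  { apply Rmult_le_pos; [lra|]. pose proof (pow2_ge_0 DR). pose proof (pow2_ge_0 DI).
    pose proof (pow2_ge_0 BN). pose proof (pow2_ge_0 DV'). nra. }
  intros K HK dx Hdx1 Eh0 Nh0 Vh0 HE0 HN0 HV0.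
  assert (Hdx : 0 < dx) by (apply Rdiv_lt_0_compat; [lra|apply lt_0_INR; lia]).
  replace L with (dx * INR K) at 1 by (unfold dx; field; apply not_0_INR; lia).
  rewrite Rmult_assoc. apply Rmult_le_compat_l; [lra|]. apply gsum_le_const. intros n Hn.
  set (k := Z.of_nat n). set (x := IZR k * dx).
  assert (Hx : 0 <= x <= L)
    by (unfold x, k; rewrite <- INR_IZR_INZ; apply grid_point_bounds; lra || lia).
  assert (Hnext : IZR (k + 1) * dx = x + dx) by (unfold x; rewrite plus_IZR; ring).
  assert (Hlip : forall f D, smooth2 f ->
            (forall y, 0 <= y <= L + 1 -> Rabs (pd 0 1 f 0 y) <= D) ->
            Rabs (f 0 (x + dx) - f 0 x) <= D * dx).
  { intros f D Hf HD. replace (D * dx) with (D * (x + dx - x)) by ring.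
    apply (smooth2_lipschitz f 0 D 0 (L + 1)); auto; lra. }
  apply energy_density_le; auto.
  - unfold re_part. rewrite !HE0, Hnext. apply (Hlip (reE E)); auto. intros; apply HDR; lra.
  - unfold im_part. rewrite !HE0, Hnext. apply (Hlip (imE E)); auto. intros; apply HDI; lra.
  - pose proof (HV0 (k + 1)%Z) as Hk1. pose proof (HV0 k) as Hk. rewrite Hnext in Hk1.
    apply (abs_increment_le_of_close _ _ (V 0 (x + dx)) (V 0 x)); [lra| |exact Hk1|exact Hk].
    apply Hlip; auto. intros; apply HDV; lra.
  - rewrite HN0. apply HBN. exact Hx.
  - rewrite mass_density_Cmod, HE0. apply HBE. exact Hx.
Qed.

Lemma smooth2_complex_sq_bounded E a b c d : smooth2 (reE E) -> smooth2 (imE E) ->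
  exists B, 0 <= B /\ forall t x, a <= t <= b -> c <= x <= d -> Cmod (E t x) ^ 2 <= B.
Proof.
  intros sRe sIm.
  destruct (smooth2_pd_bounded (reE E) 0 0 a b c d sRe) as (BR & _ & HBR).
  destruct (smooth2_pd_bounded (imE E) 0 0 a b c d sIm) as (BI & _ & HBI).
  exists (BR ^ 2 + BI ^ 2). split; [nra|].
  intros t x Ht Hx. rewrite Cmod2_alt.
  pose proof (pow_maj_Rabs _ _ 2 (HBR t x Ht Hx)). pose proof (pow_maj_Rabs _ _ 2 (HBI t x Ht Hx)).
  unfold pd, reE, imE in *. simpl in *. lra.
Qed.

Lemma grid_mass_le K dx (u : Z -> C) B : 0 <= dx ->
  (forall n, (1 <= n <= K)%nat -> Cmod (u (Z.of_nat n)) ^ 2 <= B) ->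
  dx * gsum K (mass_density (re_part u) (im_part u)) <= dx * INR K * B.
Proof.
  intros Hdx HB. rewrite Rmult_assoc. apply Rmult_le_compat_l; [exact Hdx|].
  apply gsum_le_const. intros n Hn. rewrite mass_density_Cmod. now apply HB.
Qed.

Theorem lemma3p8 (L T : R) (E : R -> R -> C) (N V : R -> R -> R) (CV : R) :
  0 < L -> 0 < T ->
  zakharov_solution L T E N V ->
  exists C4 : R, exists dx0 : R, 0 < C4 /\ 0 < dx0 /\
  forall (K M : nat), (0 < K)%nat -> (0 < M)%nat ->
  let dx := L / INR K in
  let dt := T / INR M in
  dx < dx0 ->
  forall (Eh : nat -> Z -> C) (Nh Vh : nat -> Z -> R),
    dvdm_scheme K M dx dt Eh Nh Vh ->
    (forall k : Z, Eh 0%nat k = E 0 (IZR k * dx)) ->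
    (forall k : Z, Nh 0%nat k = N 0 (IZR k * dx)) ->
    (forall k : Z, Rabs (Vh 0%nat k - V 0 (IZR k * dx)) <= CV * dx ^ 2) ->
    forall m : nat, (m <= M)%nat ->
      let Et : Z -> C := fun k => E (INR m * dt) (IZR k * dx) in
      let Nt : Z -> R := fun k => N (INR m * dt) (IZR k * dx) in
      let eE : Z -> C := fun k => Cminus (Eh m k) (Et k) in
      let eN : Z -> R := fun k => Nh m k - Nt k in
      let A : C :=
        Cplus (ip K dx (cgrid (fun k => eN k + Nt k)) (fun k => RtoC (Cmod (eE k) ^ 2)))
              (RtoC (2 * Re (ip K dx eE (fun k => Cmult (Et k) (RtoC (eN k)))))) in
      Cmod A <= 3 / 2 * gnorm K dx (cgrid eN) ^ 2 + C4 * gnorm K dx eE ^ 2.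
Proof.
  intros HL HT (sRe & sIm & sN & sV & _).
  destruct (smooth2_complex_sq_bounded E 0 T 0 L sRe sIm) as (BE & BE0 & HBE).
  destruct (smooth2_pd_bounded N 0 0 0 T 0 L sN) as (BN & BN0 & HBN).
  destruct (dvdm_initial_energy_bounded L E N V CV BE BN HL sRe sIm sV) as (H & H0 & HH);
    [intros x Hx; apply HBE; lra|intros x Hx; apply (HBN 0 x); lra|].
  set (G := linf_bound L (L * BE) H).
  assert (G0 : 0 <= G) by (apply linf_bound_nonneg; nra).
  exists (2 * (G + BE) / 2 + BN + BE + 1), 1. split; [lra|]. split; [lra|].
  intros K M HK HM dx dt Hdx1 Eh Nh Vh Hsch HE0 HN0 HV0 m Hm Et Nt eE eN A.
  assert (Hdx : 0 < dx) by (apply Rdiv_lt_0_compat; [lra|apply lt_0_INR; lia]).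
  assert (HL' : dx * INR K = L) by (unfold dx; field; apply not_0_INR; lia).
  assert (Ht : 0 <= INR m * dt <= T) by (apply grid_point_bounds; lra || lia).
  apply ip_A_le; [lra|]. intros n Hn.
  assert (Hx : 0 <= IZR (Z.of_nat n) * dx <= L)
    by (rewrite <- INR_IZR_INZ; apply grid_point_bounds; lra || lia).
  assert (HEt : Cmod (Et (Z.of_nat n)) ^ 2 <= BE) by (apply HBE; auto).
  assert (HEh : Cmod (Eh m (Z.of_nat n)) ^ 2 <= G).
  { unfold G. rewrite <- HL'.
    apply (dvdm_linf_bound K M dx dt Eh Nh Vh); auto.
    - apply Rgt_not_eq, Rdiv_lt_0_compat; [lra|apply lt_0_INR; lia].
    - apply grid_mass_le; [lra|]. intros j Hj. rewrite HE0. apply HBE; [lra|].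
      rewrite <- INR_IZR_INZ. apply grid_point_bounds; lra || lia.
    - now apply HH. }
  split; [|split; [exact HEt|apply HBN; auto]].
  eapply Rle_trans; [apply Cmod_sub_sq_le|]. lra.
Qed.
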